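(* Let $L_{\mathrm{Rect}}$ be the set of words of positive length over the alphabet $\{1,2,u,d\}$ defined in the context. Then: (1) $L_{\mathrm{Rect}}$ consists precisely of those nonempty words over $\{1,2,u,d\}$ whose last (rightmost) letter is $1$ and which contain neither $21$ nor $u1$ as a (contiguous) substring; (2) $L_{\mathrm{Rect}}$ is the language of the regular expression $(1^*(2|u)^*d)^*1^+$.
   Context: Permutations $\pi\in S_n$ are written in one-line form $[\pi_1\cdots\pi_n]$; $e_n$ denotes the identity of $S_n$ and $e_0$ the unique (empty) permutation of size $0$. A permutation is rectangular if it avoids the patterns $2413,2431,4213,4231$. For $\pi\in S_n$ and $1\le i,j\le n+1$, the insertion operator $\rho_{i,j}(\pi)\in S_{n+1}$ is obtained by increasing by $1$ every entry of $\pi$ that is $\ge i$ and then inserting the value $i$ so that it occupies position $j$. Define operators on rectangular permutations: $\psi_1=\rho_{1,1}$, with domain all rectangular permutations (including $e_0$); $\psi_2=\rho_{1,2}$, with domain the rectangular permutations $\pi$ of size $\ge 1$ with $\pi_1\ne 1$; $\psi_u(\pi)=\rho_{\pi_1,1}(\pi)$, with the same domain as $\psi_2$; $\psi_d(\pi)=\rho_{\pi_1+1,1}(\pi)$, with domain all rectangular permutations of size $\ge1$. A word $x_m x_{m-1}\cdots x_1$ over $\{1,2,u,d\}$ stands for the composition $\psi_{x_m}\circ\cdots\circ\psi_{x_1}$ (the rightmost letter is applied first). $L_{\mathrm{Rect}}$ is the set of words of length $m\ge1$ such that $\psi_{x_m}\circ\cdots\circ\psi_{x_1}(e_0)$ is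 defined, i.e. for each $j$, the permutation $\psi_{x_{j-1}}\circ\cdots\circ\psi_{x_1}(e_0)$ lies in the domain of $\psi_{x_j}$. *)

From HB Require Import structures.
From mathcomp Require Import all_boot.
Set Implicit Arguments. Unset Strict Implicit. Unset Printing Implicit Defensive.

(* Permutations in one-line form [pi_1 ... pi_n] as sequences of naturals;
   e_0 is the empty sequence. *)
Definition is_perm (pi : seq nat) : Prop := perm_eq pi (iota 1 (size pi)).

(* pi contains the pattern p: some subsequence of pi (values of a permutation
   are distinct, so a subsequence = a choice of positions) is order-isomorphic
   to p. *)
Definition contains (pi p : seq nat) : Prop :=
  exists s : seq nat, subseq s pi /\ size s = size p /\
    forall a b, a < size p -> b < size p ->
      (nth 0 s a < nth 0 s b) = (nth 0 p a < nth 0 p b).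

Definition rectangular (pi : seq nat) : Prop :=
  is_perm pi /\
  ~ contains pi [:: 2; 4; 1; 3] /\ ~ contains pi [:: 2; 4; 3; 1] /\
  ~ contains pi [:: 4; 2; 1; 3] /\ ~ contains pi [:: 4; 2; 3; 1].

(* rho_{i,j}(pi): increase entries >= i by 1, then insert value i at
   (1-based) position j. *)
Definition rho (i j : nat) (pi : seq nat) : seq nat :=
  let s := map (fun v => if i <= v then v.+1 else v) pi in
  take j.-1 s ++ i :: drop j.-1 s.

Inductive letter := L1 | L2 | Lu | Ld.

Definition letter_eqb (x y : letter) : bool :=
  match x, y with
  | L1, L1 | L2, L2 | Lu, Lu | Ld, Ld => true
  | _, _ => false
  end.
Lemma letter_eqP : Equality.axiom letter_eqb.
Proof. by case; case; constructor. Qed.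
HB.instance Definition _ := hasDecEq.Build letter letter_eqP.

(* the operators psi_x (total functions; the domains are given separately) *)
Definition psi (x : letter) (pi : seq nat) : seq nat :=
  match x with
  | L1 => rho 1 1 pi
  | L2 => rho 1 2 pi
  | Lu => rho (head 0 pi) 1 pi
  | Ld => rho (head 0 pi).+1 1 pi
  end.

Definition in_dom (x : letter) (pi : seq nat) : Prop :=
  rectangular pi /\
  match x with
  | L1 => True
  | L2 | Lu => 0 < size pi /\ head 0 pi <> 1
  | Ld => 0 < size pi
  end.

(* A word x_m x_{m-1} ... x_1 is represented by the sequence
   [:: x_m; ...; x_1] (written order; the last element x_1 is applied first).
   [reach w sigma] : the composition psi_w(e_0) is defined and equals sigma. *)
Fixpoint reach (w : seq letter) (sigma : seq nat) : Prop :=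
  match w with
  | [::] => sigma = [::]
  | x :: w' => exists pi, reach w' pi /\ in_dom x pi /\ sigma = psi x pi
  end.

Definition L_Rect (w : seq letter) : Prop :=
  1 <= size w /\ exists sigma, reach w sigma.

Definition has_factor (w f : seq letter) : Prop :=
  exists p s, w = p ++ f ++ s.

Definition block (b : seq letter) : Prop :=
  exists (a : nat) (s : seq letter),
    all (fun x => (x == L2) || (x == Lu)) s /\ b = nseq a L1 ++ s ++ [:: Ld].

Definition regex_lang (w : seq letter) : Prop :=
  exists (bs : seq (seq letter)) (k : nat),
    (forall b, b \in bs -> block b) /\ w = flatten bs ++ nseq k.+1 L1.

From mathcomp Require Import all_boot zify.
Set Implicit Arguments. Unset Strict Implicit. Unset Printing Implicit Defensive.

(* A quadruple of entries is an occurrence of 2413, 2431, 4213 or 4231 exactly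
   when the values of its last two entries interleave those of its first two,
   the overall minimum being among the last two.  Putting a new minimum in
   first or second position (psi_1, psi_2), or splitting the first entry into
   two consecutive values (psi_u, psi_d), creates no such quadruple, so every
   psi_x preserves rectangularity.  The only obstruction to applying psi_x is
   therefore the condition on the first entry, which equals 1 exactly when the
   last operator applied was psi_1.  Hence a word is in L_Rect iff its
   rightmost letter is 1 (only psi_1 applies to e_0) and no 2 or u stands
   immediately left of a 1; cutting such a word after each d gives the blocks
   of the regular expression. *)

Lemma bump_mono i : {mono bump i : x y / x < y}.
Proof. by move=> x y; rewrite !ltnNge leq_bump2. Qed.

Lemma rhoE i j pi :
  rho i j pi = take j.-1 (map (bump i) pi) ++ i :: drop j.-1 (map (bump i) pi).
Proof.
by rewrite /rho (@eq_map _ _ _ (bump i)) // => v; rewrite /bump; case: leqP.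
Qed.

Lemma rho1E i pi : rho i 1 pi = i :: map (bump i) pi.
Proof. by rewrite rhoE take0 drop0. Qed.

Lemma rho2E i h t : rho i 2 (h :: t) = bump i h :: i :: map (bump i) t.
Proof. by rewrite rhoE /= take0 drop0. Qed.

Lemma rho_perm_eq i j pi : perm_eq (rho i j pi) (i :: map (bump i) pi).
Proof. by rewrite rhoE -cat1s perm_catCA cat_take_drop. Qed.

Lemma size_rho i j pi : size (rho i j pi) = (size pi).+1.
Proof. by rewrite (perm_size (rho_perm_eq _ _ _)) /= size_map. Qed.

Lemma is_permP s : is_perm s <-> uniq s /\ {subset s <= [pred x | 0 < x <= size s]}.
Proof.
rewrite /is_perm; split=> [Hs | [Hu Hsub]].
- by split=> [|x]; rewrite ?(perm_uniq Hs) ?iota_uniq // (perm_mem Hs) mem_iota inE; lia.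
- have Hsub' : {subset s <= iota 1 (size s)}.
    by move=> x /Hsub; rewrite mem_iota inE; lia.
  have [_ Hs] := uniq_min_size Hu Hsub' (eq_leq (size_iota 1 (size s))).
  exact: uniq_perm Hu (iota_uniq _ _) Hs.
Qed.

Lemma perm_gt0 s x : is_perm s -> x \in s -> 0 < x.
Proof. by case/is_permP=> _ Hs /Hs /andP []. Qed.

Lemma is_perm_bump_cons i pi :
  is_perm pi -> 0 < i <= (size pi).+1 -> is_perm (i :: map (bump i) pi).
Proof.
case/is_permP=> Hu Hsub Hi; apply/is_permP; split.
- rewrite /= (map_inj_uniq (can_inj (bumpK i))) Hu andbT.
  by apply/mapP=> -[y _ /eqP]; apply/negP; rewrite neq_bump.
- move=> x; rewrite inE /= size_map => /predU1P [-> //| /mapP [y /Hsub Hy ->]].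
  by move: Hy; rewrite !inE /bump; case: (leqP i y) => /=; lia.
Qed.

Lemma is_perm_rho i j pi : is_perm pi -> 0 < i <= (size pi).+1 -> is_perm (rho i j pi).
Proof.
move=> Hpi Hi; rewrite /is_perm size_rho.
apply: perm_trans (rho_perm_eq _ _ _) _.
by have := is_perm_bump_cons Hpi Hi; rewrite /is_perm /= size_map.
Qed.

Definition rect_patterns : seq (seq nat) :=
  [:: [:: 2; 4; 1; 3]; [:: 2; 4; 3; 1]; [:: 4; 2; 1; 3]; [:: 4; 2; 3; 1]].

Definition same_order (s p : seq nat) : Prop :=
  forall i j, i < size p -> j < size p -> (nth 0 s i < nth 0 s j) = (nth 0 p i < nth 0 p j).

(* The disjuncts are the patterns of [rect_patterns], in that order. *)
Definition crossing (a b c d : nat) : bool :=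
  [|| [&& c < a, a < d & d < b], [&& d < a, a < c & c < b],
      [&& c < b, b < d & d < a] | [&& d < b, b < c & c < a]].

Definition crossing_free (s : seq nat) : Prop :=
  forall a b c d, subseq [:: a; b; c; d] s -> ~~ crossing a b c d.

Lemma crossing_same_order a b c d :
  crossing a b c d <-> exists2 p, p \in rect_patterns & same_order [:: a; b; c; d] p.
Proof.
split.
- case/or4P=> /and3P [? ? ?];
    [exists [:: 2; 4; 1; 3] | exists [:: 2; 4; 3; 1] | exists [:: 4; 2; 1; 3] |
     exists [:: 4; 2; 3; 1]] => //;
    by case=> [|[|[|[|i]]]] [|[|[|[|j]]]] //= _ _; lia.
- case=> p; rewrite !inE => /or4P [] /eqP -> Hp;
  by rewrite /crossing ?(Hp 2 0) ?(Hp 0 3) ?(Hp 3 1) ?(Hp 3 0) ?(Hp 0 2) ?(Hp 2 1)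
             ?(Hp 1 3) ?(Hp 1 2).
Qed.

Lemma size_rect_pattern p : p \in rect_patterns -> size p = 4.
Proof. by rewrite !inE => /or4P [] /eqP ->. Qed.

Lemma crossing_freeP s :
  crossing_free s <-> forall p, p \in rect_patterns -> ~ contains s p.
Proof.
split=> [Hs p Hp [t [Hts [Ht Ho]]] | Hs a b c d Habcd].
- rewrite (size_rect_pattern Hp) in Ht.
  case: t Hts Ht Ho => [|a [|b [|c [|d [|? ?]]]]] // Hts _ Ho.
  by move/negP: (Hs a b c d Hts); apply; apply/crossing_same_order; exists p.
- apply/negP=> /crossing_same_order [p Hp Ho].
  apply: (Hs p Hp); exists [:: a; b; c; d].
  by do !split=> //; rewrite (size_rect_pattern Hp).
Qed.

Lemma rectangularE s : rectangular s <-> is_perm s /\ crossing_free s.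
Proof.
rewrite crossing_freeP /rectangular; split=> [[Hs [H1 [H2 [H3 H4]]]] | [Hs H]].
  by split=> // p; rewrite !inE => /or4P [] /eqP ->.
by do !split=> //; apply: H; rewrite !inE eqxx ?orbT.
Qed.

Lemma crossing_free_subseq s t : subseq s t -> crossing_free t -> crossing_free s.
Proof. by move=> Hst Ht a b c d Hs; apply: Ht (subseq_trans Hs Hst). Qed.

Lemma crossing_free_map f s :
  {mono f : x y / x < y} -> crossing_free s -> crossing_free (map f s).
Proof.
move=> Hf Hs a b c d /subseqP [m _]; rewrite -map_mask.
move: (mask_subseq m s); case: (mask m s) => [|a' [|b' [|c' [|d' [|? ?]]]]] //=.
by move=> /Hs + [-> -> -> ->]; rewrite /crossing !Hf.
Qed.

Lemma crossing_free_cons v s : crossing_free s ->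
  (forall b c d, subseq [:: b; c; d] s -> ~~ crossing v b c d) -> crossing_free (v :: s).
Proof. by move=> Hs Hv a b c d /=; case: eqP => [-> | _]; [apply: Hv | apply: Hs]. Qed.

Lemma crossing_free_min m s :
  {in s, forall x, m < x} -> crossing_free s -> crossing_free (m :: s).
Proof.
move=> Hm Hs; apply: crossing_free_cons => // b c d /mem_subseq Hbcd.
have [/Hm Hc /Hm Hd] : c \in s /\ d \in s by split; apply: Hbcd; rewrite !inE eqxx ?orbT.
by rewrite /crossing; lia.
Qed.

Lemma crossing_free_second_min y m s : {in s, forall x, m < x} ->
  crossing_free (y :: s) -> crossing_free (y :: m :: s).
Proof.
move=> Hm Hys; apply: crossing_free_cons => [|b c d /=].
  by apply: crossing_free_min => //; apply: crossing_free_subseq Hys; apply: subseq_cons.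
case: eqP => [-> /mem_subseq Hcd | _ Hbcd]; last by apply: Hys; rewrite /= eqxx.
have [/Hm Hc /Hm Hd] : c \in s /\ d \in s by split; apply: Hcd; rewrite !inE eqxx ?orbT.
by rewrite /crossing; lia.
Qed.

Lemma crossing_free_twin v w s : (v.+1 == w) || (w.+1 == v) ->
  v \notin s -> w \notin s -> crossing_free (w :: s) -> crossing_free (v :: w :: s).
Proof.
move=> Hvw Hv Hw Hws; apply: crossing_free_cons => // b c d /=.
have notin x : x \in s -> (x != v) && (x != w).
  by move=> Hx; apply/andP; split; [apply: contraNneq Hv | apply: contraNneq Hw] => <-.
case: eqP => [-> /mem_subseq Hcd | _ Hbcd].
  have [/notin Hc /notin Hd] : c \in s /\ d \in s.
    by split; apply: Hcd; rewrite !inE eqxx ?orbT.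
  by rewrite /crossing; lia.
have [/notin Hb /notin Hc /notin Hd] : [/\ b \in s, c \in s & d \in s].
  by split; apply: (mem_subseq Hbcd); rewrite !inE eqxx ?orbT.
have := Hws w b c d; rewrite /= eqxx => /(_ Hbcd).
by rewrite /crossing; lia.
Qed.

Lemma crossing_free_inflate v h t : (v == h) || (v == h.+1) -> uniq (h :: t) ->
  crossing_free (h :: t) -> crossing_free (v :: map (bump v) (h :: t)).
Proof.
move=> Hv /andP [Ht _] Hfree; rewrite map_cons; apply: crossing_free_twin.
- by case/orP: Hv => /eqP ->; rewrite /bump ?leqnn ?ltnn eqxx ?orbT.
- by apply/mapP=> -[y _ /eqP]; apply/negP; rewrite neq_bump.
- by rewrite (mem_map (can_inj (bumpK v))).
- by rewrite -map_cons; apply: crossing_free_map (bump_mono v) Hfree.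
Qed.

Lemma psi1E pi : psi L1 pi = 1 :: map (bump 1) pi.
Proof. exact: rho1E. Qed.

Lemma psi2E h t : psi L2 (h :: t) = bump 1 h :: 1 :: map (bump 1) t.
Proof. exact: rho2E. Qed.

Lemma psiuE h t : psi Lu (h :: t) = h :: map (bump h) (h :: t).
Proof. exact: rho1E. Qed.

Lemma psidE h t : psi Ld (h :: t) = h.+1 :: map (bump h.+1) (h :: t).
Proof. exact: rho1E. Qed.

Lemma crossing_free_psi x pi : in_dom x pi -> crossing_free (psi x pi).
Proof.
case=> /rectangularE [Hpi Hfree].
have gt1 : {in map (bump 1) pi, forall y, 1 < y}.
  by move=> _ /mapP [y /(perm_gt0 Hpi) Hy ->]; rewrite /bump Hy.
have Hu : uniq pi by case/is_permP: Hpi.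
case: x => [_ | [Hsize _] | [Hsize _] | Hsize].
- by rewrite psi1E; apply: crossing_free_min gt1 (crossing_free_map (bump_mono 1) Hfree).
all: case: pi Hsize Hpi Hfree gt1 Hu => [|h t] // _ Hpi Hfree gt1 Hu.
- rewrite psi2E; apply: crossing_free_second_min.
    by move=> y Hy; apply: gt1; rewrite inE Hy orbT.
  by apply: (crossing_free_map (bump_mono 1) Hfree).
- by rewrite psiuE; apply: crossing_free_inflate; rewrite ?eqxx.
- by rewrite psidE; apply: crossing_free_inflate; rewrite ?eqxx ?orbT.
Qed.

Lemma perm_head_bound h t : is_perm (h :: t) -> 0 < h <= (size t).+1.
Proof. by case/is_permP=> _; apply; rewrite mem_head. Qed.

Lemma rectangular_psi x pi : in_dom x pi -> rectangular (psi x pi).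
Proof.
move=> Hdom; apply/rectangularE; split; last exact: crossing_free_psi.
case: Hdom => -[Hpi _]; case: x => [_ | [Hs _] | [Hs _] | Hs]; apply: is_perm_rho => //.
all: by case: pi Hpi Hs => [|h t] // /perm_head_bound /=; lia.
Qed.

Lemma size_psi x pi : size (psi x pi) = (size pi).+1.
Proof. by case: x; apply: size_rho. Qed.

Lemma head_psi x pi : in_dom x pi -> (head 0 (psi x pi) == 1) = (x == L1).
Proof.
case=> -[Hpi _]; case: pi Hpi => [|h t] Hpi; first by case: x => [|[]|[]|].
have /perm_head_bound Hh := Hpi.
case: x => [_ | [_ H1] | [_ H1] | _].
- by rewrite psi1E.
- by rewrite psi2E; apply/negbTE; rewrite /= /bump; lia.
- by rewrite psiuE; apply/negbTE/eqP.
- by rewrite psidE; apply/negbTE; rewrite /=; lia.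
Qed.

Lemma reach_inv w sigma : reach w sigma ->
  [/\ rectangular sigma, size sigma = size w & (head 0 sigma == 1) = (ohead w == Some L1)].
Proof.
elim: w sigma => [|x w IH] sigma /=.
  by move=> ->; split=> //; apply/rectangularE; split=> // ? ? ? ?.
case=> pi [/IH [_ Hsize _] [Hdom ->]]; split; first exact: rectangular_psi.
  by rewrite size_psi Hsize.
exact: head_psi.
Qed.

(* In a word [.. x y ..], psi_x is applied right after psi_y. *)
Definition may_follow (x y : letter) : bool := (x \in [:: L1; Ld]) || (y != L1).

Definition applicable (x : letter) (w : seq letter) : bool :=
  if w is y :: _ then may_follow x y else x == L1.

Fixpoint admissible (w : seq letter) : bool :=
  if w is x :: w' then applicable x w' && admissible w' else true.

Lemma in_dom_reach x w pi : reach w pi -> in_dom x pi <-> applicable x w.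
Proof.
case/reach_inv=> Hrect Hsize Hhead; rewrite /in_dom.
case: w pi Hsize Hhead Hrect => [|y w] [|h t] //= _ Hhead Hrect.
  by case: x; split=> //= -[_]; rewrite ltnn // => -[].
have {}Hhead : (h == 1) = (y == L1) by [].
case: x; rewrite /= /may_follow /= -?Hhead; split=> //.
all: by [move/eqP | case=> _ [_ /eqP]].
Qed.

Lemma reachableE w : (exists sigma, reach w sigma) <-> admissible w.
Proof.
elim: w => [|x w IH] /=; first by split=> // _; exists [::].
split=> [[_ [pi [Hr [Hdom _]]]] | /andP [Hx /IH [pi Hr]]].
  by apply/andP; split; [apply/(in_dom_reach x Hr) | apply/IH; exists pi].
by exists (psi x pi), pi; split=> //; split=> //; apply/(in_dom_reach x Hr).
Qed.

Lemma L_RectE w : L_Rect w <-> (w != [::]) && admissible w.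
Proof.
rewrite /L_Rect; case: w => [|x w]; first by split=> // -[].
by split=> [[_ /reachableE] | /reachableE].
Qed.

Lemma admissible_path x w : admissible (x :: w) = path may_follow x w && (last x w == L1).
Proof.
elim: w x => [|y w IH] x; first by rewrite /= andbT.
by rewrite /= -andbA -IH.
Qed.

Lemma path_factorsP (e : rel letter) x w :
  path e x w <-> forall y z, has_factor (x :: w) [:: y; z] -> e y z.
Proof.
elim: w x => [|y0 w IH] x /=.
  by split=> // _ y z [[|? [|? ?]] [s]].
split=> [/andP [Hxy /IH Hw] y z [[|a p] [s /= [Ex E]]] | H].
- by rewrite -Ex -E.
- by apply: Hw; exists p, s.
apply/andP; split; first by apply: H; exists [::], w.
by apply/IH=> y z [p [s E]]; apply: H; exists (x :: p), s; rewrite E.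
Qed.

Lemma may_follow_factors w :
  (forall y z, has_factor w [:: y; z] -> may_follow y z) <->
  ~ has_factor w [:: L2; L1] /\ ~ has_factor w [:: Lu; L1].
Proof.
by split=> [H | [H2 Hu] y z]; [split=> /H | case: y; case: z].
Qed.

Lemma last_rconsP (T : Type) (x a : T) w :
  last x w = a <-> exists w', x :: w = rcons w' a.
Proof.
split=> [<- | [w' E]]; first by exists (belast x w); apply: lastI.
by rewrite -(last_cons a) E last_rcons.
Qed.

Lemma admissibleP w : (w != [::]) && admissible w <->
  (exists w', w = rcons w' L1) /\ ~ has_factor w [:: L2; L1] /\ ~ has_factor w [:: Lu; L1].
Proof.
case: w => [|x w]; first by split=> // -[[[|? ?]]].
rewrite admissible_path /=; split=> [/andP [/path_factorsP Hw /eqP /last_rconsP Hl] |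
                                     [/last_rconsP Hl /may_follow_factors Hw]].
  by split=> //; apply/may_follow_factors.
by apply/andP; split; [apply/path_factorsP | apply/eqP].
Qed.

Lemma applicable_L1 w : applicable L1 w.
Proof. by case: w. Qed.

Lemma admissible_ones k : admissible (nseq k L1).
Proof. by elim: k => //= k ->; rewrite applicable_L1. Qed.

Lemma admissible_block b w :
  block b -> w != [::] -> admissible w -> admissible (b ++ w).
Proof.
case=> a [s [Hs ->]] Hw Hadm; rewrite -!catA.
elim: a => [|a IH]; last by rewrite /= applicable_L1.
elim: s Hs => [|x s IH] /=; first by case: w Hw Hadm.
case/andP=> Hx Hs; rewrite IH // andbT.
by case: s Hs {IH} => [|y s] /=; [case: x Hx | case/andP; case: x Hx; case: y].
Qed.

Lemma regex_admissible w : regex_lang w -> (w != [::]) && admissible w.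
Proof.
case=> bs [k [Hbs ->]]; apply/andP; split; first by case: (flatten bs).
elim: bs Hbs => [|b bs IH] Hbs; first exact: admissible_ones.
rewrite /= -catA; apply: admissible_block; first by apply: Hbs; rewrite mem_head.
  by case: (flatten bs).
by apply: IH => b' Hb'; apply: Hbs; rewrite inE Hb' orbT.
Qed.

Lemma block_L1 b : block b -> block (L1 :: b).
Proof. by case=> a [s [Hs ->]]; exists a.+1, s. Qed.

Lemma regex_lang_cat b w : block b -> regex_lang w -> regex_lang (b ++ w).
Proof.
move=> Hb [bs [k [Hbs ->]]]; exists (b :: bs), k; rewrite catA.
by split=> // b' /predU1P [-> | /Hbs].
Qed.

Lemma admissible_regex w : (w != [::]) && admissible w -> regex_lang w.
Proof.
elim: w => [|x w IH] // /andP [_ /= /andP [Hx Hw]].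
case: w IH Hx Hw => [|y w] IH Hx Hw; first by exists [::], 0; rewrite (eqP Hx).
have Hyw := IH Hw.
case: x Hx => Hx; last by rewrite -cat1s; apply: regex_lang_cat Hyw; exists 0, [::].
all: have [[|b bs] [k [Hbs E]]] := Hyw; try by move: Hx; rewrite E.
  by exists [::], k.+1; rewrite E.
all: have Htail : regex_lang (flatten bs ++ nseq k.+1 L1)
       by exists bs, k; split=> // b' Hb'; apply: Hbs; rewrite inE Hb' orbT.
all: move: Hx (Hbs b (mem_head _ _)); rewrite E /= -catA -cat_cons => Hx Hb.
all: apply: regex_lang_cat Htail.
  exact: block_L1.
all: move: Hb Hx => [[|a] [s [Hs ->]]] //= _.
- by exists 0, (L2 :: s); split=> //; apply/andP.
- by exists 0, (Lu :: s); split=> //; apply/andP.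
Qed.

Theorem lemma3p3 :
  (forall w : seq letter,
     L_Rect w <->
     ((exists w', w = rcons w' L1) /\
      ~ has_factor w [:: L2; L1] /\ ~ has_factor w [:: Lu; L1])) /\
  (forall w : seq letter, L_Rect w <-> regex_lang w).
Proof.
split=> w; apply: iff_trans (L_RectE w) _; first exact: admissibleP.
by split; [apply: admissible_regex | apply: regex_admissible].
Qed.
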